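(* In the algorithm DMA, let $\alpha_t\ge1$ be the maximum number of packets that a server needs to send or receive at time slot $t$ in the merged schedule of Step 3. Then for every $t\in[0,(\mu+1/\beta)\Delta]$, $\mathbb{E}[\alpha_t]=O(g(m))$, where $g(m)=\log(m)/\log(\log(m))$.
   Context: Model. $m$ servers, each a sender and a receiver. A coflow is an $m\times m$ nonnegative integer matrix $(d_{sr})$ of unit packets from sender $s$ to receiver $r$. Each job $j\in\mathcal{N}$ has $\mu_j$ coflows $\mathcal{D}^{(cj)}$ and a DAG $G_j$ (edge $c_1\to c_2$: $c_2$ may not start before $c_1$ finishes). Each slot, each sender sends at most one and each receiver receives at most one packet. $\mu=\max_j\mu_j$. Effective size of a coflow: $D=\max\{\max_s\sum_rd_{sr},\max_r\sum_sd_{sr}\}$; $\Delta$ is the effective size of $\sum_j\sum_c\mathcal{D}^{(cj)}$. BNA: polynomial-time procedure scheduling all packets of a coflow of effective size $D$ feasibly in $D$ consecutive slots. Algorithm DMA (constant $\beta>1/e$): Step 1: for each job, schedule its coflows one after another in a topological order of $G_j$, each with BNA, starting at time $0$. Step 2: delay each job's schedule by an independent uniformly random integer in $[0,\Delta/\beta]$. Step 3: merge the delayed schedules slot by slot (capacity constraints may be violated). Step 4: replace each slot $t$ by $\alpha_t$ slots scheduled feasibly with BNA. *)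

From HB Require Import structures.
From mathcomp Require Import all_boot all_order all_algebra all_fingroup.
From mathcomp Require Import all_classical all_reals all_analysis.
Set Implicit Arguments. Unset Strict Implicit. Unset Printing Implicit Defensive.
Import Order.TTheory GRing.Theory Num.Theory.

(* A coflow / a slot of a schedule: m x m matrix of packet counts,
   entry (s, r) = number of unit packets from sender s to receiver r. *)
Definition mat (m : nat) := 'I_m -> 'I_m -> nat.

Definition effsize (m : nat) (A : mat m) : nat :=
  maxn (\max_(s < m) \sum_(r < m) A s r) (\max_(r < m) \sum_(s < m) A s r).

Definition feasible_slot (m : nat) (A : mat m) : bool :=
  [forall s : 'I_m, \sum_(r < m) A s r <= 1] &&
  [forall r : 'I_m, \sum_(s < m) A s r <= 1].

(* Output P of BNA on coflow A: all packets of A scheduled feasibly in the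
   effsize A consecutive slots 0, ..., effsize A - 1 (relative time). *)
Definition is_BNA_schedule (m : nat) (A : mat m) (P : nat -> mat m) : Prop :=
  [/\ forall k, feasible_slot (P k),
      forall k, effsize A <= k -> forall s r, P k s r = 0
    & forall s r, \sum_(k < effsize A) P k s r = A s r].

Definition is_topo_order (k : nat) (G : rel 'I_k) (pos : {perm 'I_k}) : Prop :=
  forall c1 c2, G c1 c2 -> pos c1 < pos c2.

Definition start_time (m k : nat) (A : 'I_k -> mat m) (pos : {perm 'I_k}) (c : 'I_k) : nat :=
  \sum_(c' < k | pos c' < pos c) effsize (A c').

Definition job_sched (m k : nat) (A : 'I_k -> mat m) (pos : {perm 'I_k})
    (P : 'I_k -> nat -> mat m) : nat -> mat m :=
  fun tau s r => \sum_(c < k)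
    (if start_time A pos c <= tau then P c (tau - start_time A pos c) s r else 0).

(* Steps 2-3: merged schedule at slot t, job j delayed by d j *)
Definition merged (m n : nat) (sched : 'I_n -> nat -> mat m) (d : 'I_n -> nat)
    (t : nat) : mat m :=
  fun s r => \sum_(j < n) (if d j <= t then sched j (t - d j) s r else 0).

Definition alpha (m n : nat) (sched : 'I_n -> nat -> mat m) (d : 'I_n -> nat)
    (t : nat) : nat :=
  maxn 1 (effsize (merged sched d t)).

Definition Delta (m n : nat) (mu : 'I_n -> nat) (A : forall j, 'I_(mu j) -> mat m) : nat :=
  effsize (fun s r => \sum_(j < n) \sum_(c < mu j) A j c s r).

Definition mu_max (n : nat) (mu : 'I_n -> nat) : nat := \max_(j < n) mu j.

(* E[alpha_t] when delays are independent and uniform on {0, ..., K} *)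
Definition expected_alpha (R : realType) (m n K : nat)
    (sched : 'I_n -> nat -> mat m) (t : nat) : R :=
  ((\sum_(d : {ffun 'I_n -> 'I_K.+1}) (alpha sched (fun j => nat_of_ord (d j)) t)%:R)
    / ((K.+1 ^ n)%:R))%R.

(* Fix a port: the sending side of a server s or the receiving side of a server r.
   A job runs its coflows back to back and every BNA slot is feasible, so at any slot a
   job puts at most one packet on the port.  With independent uniform delays in
   {0, ..., K}, the port's load at slot t is therefore a sum of independent {0,1}
   variables whose means add up to at most Delta / (K + 1) <= beta, and the Chernoff
   moment bound gives E[exp (lam * load)] <= exp ((e^lam - 1) * beta).  Since alpha_t
   is the maximum of 1 and the 2m port loads, E[exp (lam * alpha_t)] is at most
   e^lam + 2 + 2m exp ((e^lam - 1) * beta), and a <= k + exp (lam * (a - k)) / lam turns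
   this into a bound on E[alpha_t].  With x = ln m, lam = ln x and
   k = (beta + 2) x / ln x, everything beyond k is O(x / ln x). *)

From HB Require Import structures.
From mathcomp Require Import all_boot all_order all_algebra all_fingroup.
From mathcomp Require Import all_classical all_reals all_analysis.
From mathcomp Require Import ring lra.
Import Order.TTheory GRing.Theory Num.Theory.

Section NatSums.
Local Open Scope nat_scope.

Lemma sum_vanishing_tail (g : nat -> nat) (E T : nat) :
  (forall k, E <= k -> g k = 0) -> \sum_(k < T) g k <= \sum_(k < E) g k.
Proof.
move=> g0; rewrite -!(big_mkord xpredT); case: (leqP T E) => [TE|ET].
  by rewrite (big_cat_nat (leq0n T) TE) /= leq_addr.
rewrite (big_cat_nat (leq0n E) (ltnW ET)) /= [X in _ + X]big_nat_cond.
by rewrite [X in _ + X]big1 ?addn0 // => k /andP[/andP[Ek _] _]; exact: g0.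
Qed.

Lemma sum_shifted_le (h : nat -> nat) (st E T : nat) :
  (forall k, E <= k -> h k = 0) ->
  \sum_(tau < T) (if st <= tau then h (tau - st) else 0) <= \sum_(k < E) h k.
Proof.
move=> h0; pose g tau := if st <= tau then h (tau - st) else 0.
apply: leq_trans (sum_vanishing_tail g (st + E) T _) _ => [k|].
  by rewrite /g; case: ifP => // stk Ek; apply: h0; rewrite leq_subRL.
rewrite -(big_mkord xpredT g) (big_cat_nat (leq0n st) (leq_addr E st)) /=.
rewrite [X in X + _]big_nat_cond big1 ?add0n => [|k /andP[/andP[_ kst] _]]; last first.
  by rewrite /g leqNgt kst.
rewrite -{1}(add0n st) big_addn addKn -(big_mkord xpredT).
by apply: eq_leq; apply: eq_bigr => k _; rewrite /g leq_addl addnK.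
Qed.

Lemma sum_reversed_le (f : nat -> nat) (N t : nat) :
  \sum_(x < N) (if x <= t then f (t - x) else 0) <= \sum_(tau < t.+1) f tau.
Proof.
pose g x := if x <= t then f (t - x) else 0.
apply: leq_trans (sum_vanishing_tail g t.+1 N _) _ => [k tk|].
  by rewrite /g leqNgt tk.
rewrite -(big_mkord xpredT g) -(big_mkord xpredT f) big_nat_rev /=.
rewrite big_nat_cond [leqRHS]big_nat_cond; apply: eq_leq; apply: eq_bigr.
by move=> x /andP[/andP[_ xt] _]; rewrite /g add0n subSS leq_subr subKn.
Qed.

Lemma sum_le1_of_single_support (I : finType) (v : I -> nat) :
  (forall i, v i <= 1) -> (forall i1 i2, v i1 != 0 -> v i2 != 0 -> i1 = i2) ->
  \sum_i v i <= 1.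
Proof.
move=> v1 vuniq; case: (pickP (fun i => v i != 0)) => [i0 vi0 | v0].
  rewrite (bigD1 i0) //= big1 ?addn0 // => i ii0.
  by apply/eqP; apply: contraNT ii0 => vi; rewrite (vuniq _ _ vi vi0).
by rewrite big1 // => i _; apply/eqP/negbFE/v0.
Qed.

End NatSums.

Local Open Scope ring_scope.

Lemma expR_bit {R : realType} (lam : R) (b : nat) : (b <= 1)%N ->
  expR (lam * b%:R) = 1 + (expR lam - 1) * b%:R.
Proof. by case: b => [|[|//]] _; rewrite ?mulr0 ?expR0 ?addr0 // !mulr1 addrC subrK. Qed.

Lemma sum_ffun_expR_le {R : realType} (n N : nat) (y : 'I_n -> 'I_N -> nat) (lam b : R) :
  (0 < N)%N -> 0 <= lam -> (forall j x, y j x <= 1)%N ->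
  (\sum_j \sum_x y j x)%:R <= b * N%:R ->
  \sum_(d : {ffun 'I_n -> 'I_N}) expR (lam * (\sum_j y j (d j))%:R)
    <= N%:R ^+ n * expR ((expR lam - 1) * b).
Proof.
move=> N0 lam0 y1 yb; have N0R : (0 : R) < N%:R by rewrite ltr0n.
have el1 : 0 <= expR lam - 1 by rewrite subr_ge0 -expR0 ler_expR.
(* Summing over all delay vectors d factors into a product over jobs: independence. *)
have factor : \sum_(d : {ffun 'I_n -> 'I_N}) expR (lam * (\sum_j y j (d j))%:R)
    = \prod_j \sum_x expR (lam * (y j x)%:R).
  rewrite (bigA_distr_bigA (fun j x => expR (lam * (y j x)%:R))) /=.
  by apply: eq_bigr => d _; rewrite natr_sum mulr_sumr expR_sum.
have job j : \sum_x expR (lam * (y j x)%:R)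
    = N%:R * (1 + (expR lam - 1) * ((\sum_x y j x)%:R / N%:R)).
  rewrite (eq_bigr _ (fun x _ => @expR_bit R lam _ (y1 j x))) big_split /= sumr_const.
  by rewrite card_ord -mulr_sumr -natr_sum; field; rewrite gt_eqF.
rewrite factor (eq_bigr _ (fun j _ => job j)).
apply: (@le_trans _ _ (\prod_j (N%:R * expR ((expR lam - 1) * ((\sum_x y j x)%:R / N%:R))))).
  apply: ler_prod => j _; rewrite mulr_ge0 ?ler0n ?addr_ge0 ?mulr_ge0 ?divr_ge0 //=.
  by rewrite ler_pM2l // expR_ge1Dx.
rewrite big_split /= prodr_const card_ord -expR_sum ler_pM2l ?exprn_gt0 // ler_expR.
by rewrite -mulr_sumr ler_wpM2l // -mulr_suml -natr_sum ler_pdivrMr.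
Qed.

(* A load counts the packets a slot puts on one port. *)
Section Load.
Local Open Scope nat_scope.
Variables (m : nat) (load : mat m -> nat).
Hypothesis load_sum : forall (I : finType) (F : I -> mat m),
  load (fun s r => \sum_i F i s r) = \sum_i load (F i).
Hypothesis load_feasible : forall M, feasible_slot M -> load M <= 1.
Hypothesis load_effsize : forall M, load M <= effsize M.

Lemma load0 : load (fun _ _ => 0) = 0.
Proof.
have -> : (fun _ _ => 0) = (fun s r => \sum_(i < 0) (fun _ _ => 0) s r) :> mat m.
  by apply/funext => s; apply/funext => r; rewrite big_ord0.
by rewrite load_sum big_ord0.
Qed.

Lemma load_if (b : bool) (M : mat m) :
  load (fun s r => if b then M s r else 0) = if b then load M else 0.
Proof. by case: b; last exact: load0. Qed.

Section Job.
Variables (k : nat) (A : 'I_k -> mat m) (pos : {perm 'I_k}) (P : 'I_k -> nat -> mat m).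
Hypothesis bna : forall c, is_BNA_schedule (A c) (P c).

Lemma load_bna_slot_eq0 c i : effsize (A c) <= i -> load (P c i) = 0.
Proof.
case: (bna c) => _ P0 _ ci; rewrite -load0; congr load.
by apply/funext => s; apply/funext => r; exact: P0.
Qed.

Lemma load_coflow c : load (A c) = \sum_(i < effsize (A c)) load (P c i).
Proof.
case: (bna c) => _ _ PA; rewrite -load_sum; congr load.
by apply/funext => s; apply/funext => r; rewrite PA.
Qed.

Lemma load_job_sched tau : load (job_sched A pos P tau) =
  \sum_c (if start_time A pos c <= tau then load (P c (tau - start_time A pos c)) else 0).
Proof. by rewrite /job_sched load_sum; apply: eq_bigr => c _; exact: load_if. Qed.

Lemma start_time_lt c1 c2 : pos c1 < pos c2 ->
  start_time A pos c1 + effsize (A c1) <= start_time A pos c2.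
Proof.
move=> lt12; rewrite /start_time [leqRHS](bigD1 c1) //= addnC leq_add2l.
rewrite [leqLHS]big_mkcond [leqRHS]big_mkcond; apply: leq_sum => c _.
case: ifP => // lt1; rewrite ifT //; apply/andP; split; first exact: ltn_trans lt12.
by apply: contraTneq lt1 => ->; rewrite ltnn.
Qed.

Lemma load_job_sched_le1 tau : load (job_sched A pos P tau) <= 1.
Proof.
rewrite load_job_sched; apply: sum_le1_of_single_support => [c|].
  by case: ifP => // _; apply: load_feasible; case: (bna c).
(* The coflows of a job occupy the disjoint windows [start, start + effsize). *)
have active c : (if start_time A pos c <= tau then
    load (P c (tau - start_time A pos c)) else 0) != 0 ->
    start_time A pos c <= tau < start_time A pos c + effsize (A c).
  case: ifP => // stc; rewrite /= -ltn_subLR // ltnNge.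
  by apply: contra => /load_bna_slot_eq0 ->.
move=> c1 c2 /active/andP[st1 en1] /active/andP[st2 en2]; apply: (@perm_inj _ pos).
case: (ltngtP (pos c1) (pos c2)) => [lt12|lt21|/val_inj //].
- by move: (leq_trans en1 (start_time_lt _ _ lt12)); rewrite ltnNge st2.
- by move: (leq_trans en2 (start_time_lt _ _ lt21)); rewrite ltnNge st1.
Qed.

Lemma sum_load_job_sched T :
  \sum_(tau < T) load (job_sched A pos P tau) <= \sum_c load (A c).
Proof.
rewrite (eq_bigr _ (fun (tau : 'I_T) _ => load_job_sched tau)).
rewrite exchange_big /=; apply: leq_sum => c _; rewrite load_coflow.
by apply: (sum_shifted_le (fun i => load (P c i))) => i; exact: load_bna_slot_eq0.
Qed.

End Job.

Variables (n : nat) (mu : 'I_n -> nat) (A : forall j, 'I_(mu j) -> mat m)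
  (pos : forall j, {perm 'I_(mu j)}) (P : forall j, 'I_(mu j) -> nat -> mat m).
Hypothesis bna : forall j c, is_BNA_schedule (A j c) (P j c).
Variables (N t : nat).

Definition delayed_load (j : 'I_n) (x : 'I_N) :=
  if x <= t then load (job_sched (A j) (pos j) (P j) (t - x)) else 0.

Lemma load_merged (d : 'I_n -> 'I_N) :
  load (merged (fun j => job_sched (A j) (pos j) (P j)) (fun j => nat_of_ord (d j)) t)
  = \sum_j delayed_load j (d j).
Proof. by rewrite /merged load_sum; apply: eq_bigr => j _; exact: load_if. Qed.

Lemma delayed_load_le1 j x : delayed_load j x <= 1.
Proof. by rewrite /delayed_load; case: ifP => // _; exact: load_job_sched_le1. Qed.

Lemma sum_delayed_load_le : \sum_j \sum_x delayed_load j x <= Delta A.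
Proof.
apply: leq_trans (load_effsize _); rewrite load_sum; apply: leq_sum => j _.
rewrite load_sum /delayed_load.
apply: leq_trans (sum_reversed_le (fun tau => load (job_sched (A j) (pos j) (P j) tau)) N t) _.
exact: sum_load_job_sched.
Qed.

Local Open Scope ring_scope.

Lemma sum_expR_load_merged_le {R : realType} (lam b : R) : (0 < N)%N -> 0 <= lam ->
  (Delta A)%:R <= b * N%:R ->
  \sum_(d : {ffun 'I_n -> 'I_N}) expR (lam * (load (merged
      (fun j => job_sched (A j) (pos j) (P j)) (fun j => nat_of_ord (d j)) t))%:R)
    <= N%:R ^+ n * expR ((expR lam - 1) * b).
Proof.
move=> N0 lam0 DeltaN; under eq_bigr do rewrite load_merged.
apply: sum_ffun_expR_le => //; first exact: delayed_load_le1.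
by apply: le_trans DeltaN; rewrite ler_nat; exact: sum_delayed_load_le.
Qed.

End Load.

Arguments sum_expR_load_merged_le {m load} load_sum load_feasible load_effsize
  {n mu A pos P} bna {N} t {R lam b}.

Definition row_load {m : nat} (s0 : 'I_m) (M : mat m) : nat := (\sum_r M s0 r)%N.
Definition col_load {m : nat} (r0 : 'I_m) (M : mat m) : nat := (\sum_s M s r0)%N.

Section PortLoads.
Local Open Scope nat_scope.
Variable m : nat.

Lemma row_load_sum s0 (I : finType) (F : I -> mat m) :
  row_load s0 (fun s r => \sum_i F i s r) = \sum_i row_load s0 (F i).
Proof. exact: exchange_big. Qed.

Lemma col_load_sum r0 (I : finType) (F : I -> mat m) :
  col_load r0 (fun s r => \sum_i F i s r) = \sum_i col_load r0 (F i).
Proof. exact: exchange_big. Qed.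

Lemma row_load_feasible s0 (M : mat m) : feasible_slot M -> row_load s0 M <= 1.
Proof. by case/andP => /forallP row1 _; exact: row1. Qed.

Lemma col_load_feasible r0 (M : mat m) : feasible_slot M -> col_load r0 M <= 1.
Proof. by case/andP => _ /forallP col1; exact: col1. Qed.

Lemma row_load_effsize s0 (M : mat m) : row_load s0 M <= effsize M.
Proof. exact: leq_trans (leq_bigmax s0) (leq_maxl _ _). Qed.

Lemma col_load_effsize r0 (M : mat m) : col_load r0 M <= effsize M.
Proof. exact: leq_trans (leq_bigmax r0) (leq_maxr _ _). Qed.

End PortLoads.

Lemma expR_maxn {R : realType} (lam : R) (a b : nat) :
  expR (lam * (maxn a b)%:R) <= expR (lam * a%:R) + expR (lam * b%:R).
Proof. by case: (leqP a b) => _; rewrite ?lerDr ?lerDl expR_ge0. Qed.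

Lemma expR_bigmax {R : realType} {I : finType} (lam : R) (f : I -> nat) :
  expR (lam * (\max_i f i)%:R) <= 1 + \sum_i expR (lam * (f i)%:R).
Proof.
have sum_ge0 : 0 <= \sum_i expR (lam * (f i)%:R) by apply: sumr_ge0 => i _; exact: expR_ge0.
case: (posnP #|I|) => [/card0_eq I0 | /(bigop.eq_bigmax f)[i ->]].
  by rewrite big_pred0 // mulr0 expR0 lerDl.
rewrite (bigD1 i) //= addrCA lerDl addr_ge0 //.
by apply: sumr_ge0 => j _; exact: expR_ge0.
Qed.

Lemma expR_alpha_le {R : realType} {m n : nat} (S : 'I_n -> nat -> mat m) d t (lam : R) :
  expR (lam * (alpha S d t)%:R) <= expR lam + 2 +
    \sum_s expR (lam * (row_load s (merged S d t))%:R) +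
    \sum_r expR (lam * (col_load r (merged S d t))%:R).
Proof.
rewrite /alpha /effsize; apply: le_trans (expR_maxn _ _ _) _.
rewrite mulr1 -!addrA lerD2l; apply: le_trans (expR_maxn _ _ _) _.
have rows := expR_bigmax lam (fun s => row_load s (merged S d t)).
have cols := expR_bigmax lam (fun r => col_load r (merged S d t)).
rewrite /row_load /col_load /= in rows cols *; lra.
Qed.

Lemma le_expR_shift {R : realType} (lam k a : R) : 0 < lam ->
  a <= k + expR (- (lam * k)) / lam * expR (lam * a).
Proof.
move=> lam0; rewrite mulrAC -expRD -lerBlDl ler_pdivlMr //.
have := expR_ge1Dx (- (lam * k) + lam * a); lra.
Qed.

Section ExpectedAlpha.
Variables (R : realType) (m n : nat) (mu : 'I_n -> nat) (A : forall j, 'I_(mu j) -> mat m)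
  (pos : forall j, {perm 'I_(mu j)}) (P : forall j, 'I_(mu j) -> nat -> mat m).
Hypothesis bna : forall j c, is_BNA_schedule (A j c) (P j c).
Variables (K t : nat) (lam b : R).
Hypotheses (lam0 : 0 < lam) (DeltaK : (Delta A)%:R <= b * K.+1%:R).

Local Notation sched := (fun j => job_sched (A j) (pos j) (P j)).
Local Notation slot d := (merged sched (fun j => nat_of_ord (d j)) t).

Lemma sum_expR_alpha_le :
  \sum_(d : {ffun 'I_n -> 'I_K.+1}) expR (lam * (alpha sched (fun j => nat_of_ord (d j)) t)%:R)
    <= (K.+1 ^ n)%:R * (expR lam + 2 + 2 * m%:R * expR ((expR lam - 1) * b)).
Proof.
set Q : R := (K.+1 ^ n)%:R; set E := expR ((expR lam - 1) * b).
have ports (load : 'I_m -> mat m -> nat) :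
    (forall i (I : finType) (F : I -> mat m),
      load i (fun s r => \sum_(x : I) F x s r) = \sum_x load i (F x)) ->
    (forall i M, feasible_slot M -> load i M <= 1)%N ->
    (forall i M, load i M <= effsize M)%N ->
    \sum_(d : {ffun 'I_n -> 'I_K.+1}) \sum_i expR (lam * (load i (slot d))%:R) <= m%:R * (Q * E).
  move=> lsum lfeas leff; rewrite exchange_big /=.
  apply: (@le_trans _ _ (\sum_(i < m) (Q * E))); last by rewrite sumr_const card_ord mulr_natl.
  apply: ler_sum => i _; rewrite /Q natrX.
  exact: (sum_expR_load_merged_le (lsum i) (lfeas i) (leff i) bna t (ltn0Sn K) (ltW lam0) DeltaK).
have rows := ports _ (@row_load_sum m) (@row_load_feasible m) (@row_load_effsize m).
have cols := ports _ (@col_load_sum m) (@col_load_feasible m) (@col_load_effsize m).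
apply: le_trans (ler_sum _ (fun d _ => expR_alpha_le _ _ _ lam)) _.
have consts : \sum_(d : {ffun 'I_n -> 'I_K.+1}) (expR lam + 2) = Q * (expR lam + 2).
  by rewrite sumr_const card_ffun !card_ord mulr_natl.
rewrite big_split big_split /= consts; lra.
Qed.

Lemma expected_alpha_le (k : R) :
  expected_alpha R K sched t <=
    k + expR (- (lam * k)) / lam * (expR lam + 2 + 2 * m%:R * expR ((expR lam - 1) * b)).
Proof.
have Q0 : (0 : R) < (K.+1 ^ n)%:R by rewrite ltr0n expn_gt0.
rewrite /expected_alpha ler_pdivrMr //.
apply: le_trans (ler_sum _ (fun d _ => le_expR_shift lam k _ lam0)) _.
rewrite big_split /= sumr_const card_ffun !card_ord -mulr_sumr mulrDl [k * _]mulr_natr lerD2l.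
rewrite -[leRHS]mulrA; apply: ler_wpM2l; first by rewrite divr_ge0 ?expR_ge0 ?ltW.
by rewrite mulrC; exact: sum_expR_alpha_le.
Qed.

End ExpectedAlpha.

Arguments expected_alpha_le {R m n mu A pos P} bna {K} t {lam b}.

Lemma expR1_le4 {R : realType} : expR (1 : R) <= 4.
Proof.
have half_inv : expR (2^-1 : R) * expR (- 2^-1) = 1 by rewrite -expRD subrr expR0.
have half_le2 : expR (2^-1 : R) <= 2.
  have := expR_ge1Dx (- 2^-1 : R); have := expR_gt0 (2^-1 : R); nra.
have -> : (1 : R) = 2^-1 + 2^-1 by field.
by rewrite expRD; have := expR_gt0 (2^-1 : R); nra.
Qed.

Lemma bound_at_lnln_le {R : realType} (beta x : R) : 0 < beta -> 1 < x ->
  (beta + 2) * x / ln x + expR (- (ln x * ((beta + 2) * x / ln x))) / ln x *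
    (x + 2 + 2 * expR x * expR ((x - 1) * beta)) <= (beta + 7) * (x / ln x).
Proof.
move=> beta0 x1; have lnx0 : 0 < ln x := ln_gt0 x1.
have -> : ln x * ((beta + 2) * x / ln x) = (beta + 2) * x by field; rewrite gt_eqF.
set a := expR (- ((beta + 2) * x)).
have bx0 : 0 < beta * x by rewrite mulr_gt0 // (lt_trans ltr01 x1).
have ax : a * x <= 1.
  rewrite -(expRxMexpNx_1 ((beta + 2) * x)) mulrC ler_wpM2r ?expR_ge0 //.
  by apply: le_trans (expR_ge1Dx _); lra.
have a1 : a <= 1 by rewrite expR_le1; lra.
have a_ports : a * expR x * expR ((x - 1) * beta) <= 1 by rewrite -!expRD expR_le1; lra.
have -> : (beta + 2) * x / ln x + a / ln x * (x + 2 + 2 * expR x * expR ((x - 1) * beta))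
    = ((beta + 2) * x + (a * x + 2 * a + 2 * (a * expR x * expR ((x - 1) * beta)))) / ln x.
  by field; rewrite gt_eqF.
by rewrite [leRHS]mulrA ler_pM2r ?invr_gt0 //; lra.
Qed.

Theorem lemma4 (R : realType) (beta : R) (hbeta : expR (-1) < beta) :
  exists C : R, exists m0 : nat,
  forall (m n : nat) (mu : 'I_n -> nat)
    (A : forall j : 'I_n, 'I_(mu j) -> mat m)
    (G : forall j : 'I_n, rel 'I_(mu j))
    (pos : forall j : 'I_n, {perm 'I_(mu j)})
    (P : forall j : 'I_n, 'I_(mu j) -> nat -> mat m)
    (K t : nat),
  (m0 <= m)%N ->
  (forall j, is_topo_order (G j) (pos j)) ->
  (forall j c, is_BNA_schedule (A j c) (P j c)) ->
  (K%:R <= (Delta A)%:R / beta < K.+1%:R) ->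
  t%:R <= ((mu_max mu)%:R + beta^-1) * (Delta A)%:R ->
  expected_alpha R K (fun j => job_sched (A j) (pos j) (P j)) t
    <= C * (ln (m%:R : R) / ln (ln (m%:R : R))).
Proof.
have beta0 : 0 < beta := lt_trans (expR_gt0 _) hbeta.
exists (beta + 7), 5%N => m n mu A G pos P K t m5 _ bna /andP[_ DeltaK] _.
have m_gt0 : (0 : R) < m%:R by rewrite ltr0n (leq_trans _ m5).
set x := ln (m%:R : R).
have expRx : expR x = m%:R by rewrite lnK // posrE.
have x1 : 1 < x.
  by rewrite -ltr_expR expRx; apply: le_lt_trans expR1_le4 _; rewrite (ltr_nat R 4 m).
have lnx0 : 0 < ln x := ln_gt0 x1.
have DeltaK' : (Delta A)%:R <= beta * K.+1%:R.
  by rewrite ltr_pdivrMr // in DeltaK; rewrite mulrC ltW.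
apply: le_trans (expected_alpha_le bna t lnx0 DeltaK' ((beta + 2) * x / ln x)) _.
rewrite lnK ?posrE ?(lt_trans ltr01 x1) // -expRx.
exact: bound_at_lnln_le.
Qed.
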